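(* Let $n\ge0$ be an integer or $n=\infty$ and let $\Gamma\xrightarrow{\varphi}K\xrightarrow{\varphi'}L$ be homomorphisms of discrete groups. If $\varphi$ and $\varphi'\circ\varphi$ are boundedly $n$-acyclic, then $\varphi'$ is boundedly $n$-acyclic.
   Context: An $\mathbb{R}$-generated Banach $K$-module is one of the form $\ell^\infty(S,\mathbb{R})$ for a $K$-set $S$, with $(k\cdot f)(s)=f(k^{-1}s)$. For a homomorphism $\psi\colon\Gamma\to K$, $\psi^{-1}V$ is $V$ with $\Gamma$ acting via $\psi$, and the restriction map $H^\bullet_b(\psi;V)\colon H^\bullet_b(K;V)\to H^\bullet_b(\Gamma;\psi^{-1}V)$ is induced by precomposition with $\psi$ on invariant bounded cochains of the standard resolution. $\psi$ is boundedly $n$-acyclic if $H^i_b(\psi;V)$ is an isomorphism for $i\le n$ and injective for $i=n+1$ for every $\mathbb{R}$-generated Banach $K$-module $V$. *)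

From mathcomp Require Import all_boot all_order all_algebra.
From mathcomp Require Import Rstruct.
Set Implicit Arguments. Unset Strict Implicit. Unset Printing Implicit Defensive.
Import Order.TTheory GRing.Theory Num.Theory.
Local Open Scope ring_scope.

Record group := Group {
  gcar :> Type;
  gmul : gcar -> gcar -> gcar;
  gone : gcar;
  ginv : gcar -> gcar;
  gmulA : forall a b c, gmul a (gmul b c) = gmul (gmul a b) c;
  gmul1 : forall a, gmul gone a = a;
  gmulV : forall a, gmul (ginv a) a = gone
}.

Definition is_hom (G H : group) (f : G -> H) : Prop :=
  forall a b, f (gmul a b) = gmul (f a) (f b).

Definition is_action (G : group) (S : Type) (act : G -> S -> S) : Prop :=
  (forall s, act (gone G) s = s) /\
  (forall a b s, act (gmul a b) s = act a (act b s)).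

(** Inhomogeneous notation aside: homogeneous (standard resolution) cochains
    of degree i with values in l^oo(S,R): functions G^{i+1} -> (S -> R). *)
Definition cochain (G : group) (S : Type) (i : nat) :=
  ('I_i.+1 -> G) -> S -> Rdefinitions.R.

Definition bounded_cochain (G : group) (S : Type) (i : nat) (f : cochain G S i) :=
  exists M : Rdefinitions.R, forall x s, `|f x s| <= M.

(** G-invariance: f(g x) = g . f(x), where (g . v)(s) = v(g^{-1} s). *)
Definition invariant_cochain (G : group) (S : Type) (act : G -> S -> S) (i : nat)
  (f : cochain G S i) :=
  forall g x s, f (fun k => gmul g (x k)) s = f x (act (ginv g) s).

Definition delta (G : group) (S : Type) (i : nat) (f : cochain G S i) :
  cochain G S i.+1 :=
  fun x s => \sum_(j < i.+2) (-1) ^+ j * f (fun k => x (lift j k)) s.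

Definition Hb_cocycle (G : group) (S : Type) (act : G -> S -> S) (i : nat)
  (f : cochain G S i) :=
  [/\ bounded_cochain f, invariant_cochain act f & forall x s, delta f x s = 0].

Definition Hb_coboundary (G : group) (S : Type) (act : G -> S -> S) (i : nat) :
  cochain G S i -> Prop :=
  match i return cochain G S i -> Prop with
  | 0 => fun f => forall x s, f x s = 0
  | j.+1 => fun f => exists h : cochain G S j,
      [/\ bounded_cochain h, invariant_cochain act h & forall x s, f x s = delta h x s]
  end.

Definition restr (Gam K : group) (psi : Gam -> K) (S : Type) (i : nat)
  (f : cochain K S i) : cochain Gam S i :=
  fun x s => f (fun k => psi (x k)) s.

Definition pull_act (Gam K : group) (psi : Gam -> K) (S : Type) (act : K -> S -> S) :
  Gam -> S -> S := fun g s => act (psi g) s.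

(** H^i_b(psi; l^oo(S)) is injective: unfolded on representatives. *)
Definition Hb_restr_injective (Gam K : group) (psi : Gam -> K) (i : nat) : Prop :=
  forall (S : Type) (act : K -> S -> S), is_action act ->
  forall f : cochain K S i, Hb_cocycle act f ->
    Hb_coboundary (pull_act psi act) (restr psi f) -> Hb_coboundary act f.

(** H^i_b(psi; l^oo(S)) is surjective: unfolded on representatives. *)
Definition Hb_restr_surjective (Gam K : group) (psi : Gam -> K) (i : nat) : Prop :=
  forall (S : Type) (act : K -> S -> S), is_action act ->
  forall g : cochain Gam S i, Hb_cocycle (pull_act psi act) g ->
    exists f : cochain K S i, Hb_cocycle act f /\
      Hb_coboundary (pull_act psi act) (fun x s => g x s - restr psi f x s).

Inductive natinf := Fin of nat | Inf.

Definition boundedly_acyclic (Gam K : group) (psi : Gam -> K) (n : natinf) : Prop :=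
  match n with
  | Fin m => (forall i : nat, leq i m ->
                Hb_restr_injective psi i /\ Hb_restr_surjective psi i) /\
             Hb_restr_injective psi m.+1
  | Inf => forall i : nat, Hb_restr_injective psi i /\ Hb_restr_surjective psi i
  end.

From mathcomp Require Import all_boot all_order all_algebra.
From mathcomp Require Import Rstruct.
Set Implicit Arguments. Unset Strict Implicit. Unset Printing Implicit Defensive.
Import Order.TTheory GRing.Theory Num.Theory.
Local Open Scope ring_scope.

(* Restriction is functorial: restricting
   along phi' o phi is (definitionally) restricting along phi' and then along
   phi, and restriction maps bounded invariant cocycles to bounded invariant
   cocycles and coboundaries to coboundaries.  Hence, in each degree i:
   - injectivity for phi' o phi gives injectivity for phi' (a class of L whose
     restriction to K vanishes also vanishes on Gam, hence was zero);
   - surjectivity for phi' o phi together with injectivity for phi gives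
     surjectivity for phi' (for a cocycle g on K, pick f on L with the same
     restriction to Gam as g, up to coboundaries; then g - res f is a cocycle
     on K dying on Gam, hence a coboundary on K). *)

Section GroupFacts.

Variable G : group.

Lemma gmulV_r (a : G) : gmul a (ginv a) = gone G.
Proof.
rewrite -[gmul a (ginv a)]gmul1 -[in gmul (gone G) _](gmulV (ginv a)).
by rewrite -gmulA [gmul (ginv a) (gmul a (ginv a))]gmulA gmulV gmul1 gmulV.
Qed.

Lemma gmul1_r (a : G) : gmul a (gone G) = a.
Proof. by rewrite -(gmulV a) gmulA gmulV_r gmul1. Qed.

Lemma ginv_uniq (a b : G) : gmul b a = gone G -> b = ginv a.
Proof. by move=> ba1; rewrite -(gmul1_r b) -(gmulV_r a) gmulA ba1 gmul1. Qed.

End GroupFacts.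

Section Homomorphisms.

Variables (G H : group) (psi : G -> H).
Hypothesis hom_psi : is_hom psi.

Lemma hom1 : psi (gone G) = gone H.
Proof.
have idem : psi (gone G) = gmul (psi (gone G)) (psi (gone G)).
  by rewrite -hom_psi gmul1.
by rewrite -(gmulV (psi (gone G))) {3}idem gmulA gmulV gmul1.
Qed.

Lemma homV (g : G) : psi (ginv g) = ginv (psi g).
Proof. by apply: ginv_uniq; rewrite -hom_psi gmulV hom1. Qed.

Lemma pull_action (S : Type) (act : H -> S -> S) :
  is_action act -> is_action (pull_act psi act).
Proof.
move=> [act1 actM]; rewrite /pull_act; split => [s|a b s].
  by rewrite hom1.
by rewrite hom_psi actM.
Qed.

Variables (S : Type) (act : H -> S -> S).

Lemma restr_bounded (i : nat) (f : cochain H S i) :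
  bounded_cochain f -> bounded_cochain (restr psi f).
Proof. by move=> [M bdM]; exists M => x s; apply: bdM. Qed.

Lemma restr_invariant (i : nat) (f : cochain H S i) :
  invariant_cochain act f -> invariant_cochain (pull_act psi act) (restr psi f).
Proof.
move=> inv_f g x s; rewrite /restr /pull_act.
have -> : (fun k => psi (gmul g (x k))) = (fun k => gmul (psi g) (psi (x k))).
  by apply: boolp.funext => k; rewrite hom_psi.
by rewrite inv_f homV.
Qed.

Lemma restr_cocycle (i : nat) (f : cochain H S i) :
  Hb_cocycle act f -> Hb_cocycle (pull_act psi act) (restr psi f).
Proof.
move=> [bd_f inv_f closed_f]; split.
- exact: restr_bounded.
- exact: restr_invariant.
- move=> x s; exact: (closed_f (fun k => psi (x k)) s).
Qed.

Lemma restr_coboundary (i : nat) (f : cochain H S i) :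
  Hb_coboundary act f -> Hb_coboundary (pull_act psi act) (restr psi f).
Proof.
case: i f => [|j] f /=.
  by move=> f0 x s; apply: f0.
move=> [h [bd_h inv_h dh]]; exists (restr psi h); split.
- exact: restr_bounded.
- exact: restr_invariant.
- move=> x s; exact: (dh (fun k => psi (x k)) s).
Qed.

End Homomorphisms.

Lemma sub_cocycle (G : group) (S : Type) (act : G -> S -> S) (i : nat)
  (f g : cochain G S i) :
  Hb_cocycle act f -> Hb_cocycle act g ->
  Hb_cocycle act (fun x s => f x s - g x s).
Proof.
move=> [[M bdM] inv_f closed_f] [[N bdN] inv_g closed_g]; split.
- exists (M + N) => x s; apply: le_trans (ler_normB _ _) _; exact: lerD.
- by move=> a x s; rewrite inv_f inv_g.
- move=> x s; rewrite /delta; under eq_bigr do rewrite mulrBr.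
  by rewrite sumrB; move: (closed_f x s) (closed_g x s); rewrite /delta => -> ->;
     rewrite subr0.
Qed.

Section TwoOutOfThree.

Variables (Gam K L : group) (phi : Gam -> K) (phi' : K -> L).
Hypotheses (hom_phi : is_hom phi) (hom_phi' : is_hom phi').

Lemma restr_injective_of_comp (i : nat) :
  Hb_restr_injective (fun g => phi' (phi g)) i -> Hb_restr_injective phi' i.
Proof.
move=> inj_comp S act act_L f cocycle_f trivial_on_K.
exact: inj_comp (restr_coboundary hom_phi trivial_on_K).
Qed.

Lemma restr_surjective_of_comp (i : nat) :
  Hb_restr_injective phi i ->
  Hb_restr_surjective (fun g => phi' (phi g)) i ->
  Hb_restr_surjective phi' i.
Proof.
move=> inj_phi surj_comp S act act_L g cocycle_g.
have [f [cocycle_f same_on_Gam]] :=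
  surj_comp S act act_L (restr phi g) (restr_cocycle hom_phi cocycle_g).
exists f; split => //.
apply: (inj_phi S (pull_act phi' act) (pull_action hom_phi' act_L)) same_on_Gam.
exact: sub_cocycle (restr_cocycle hom_phi' cocycle_f).
Qed.

Lemma restr_bijective_of_comp (i : nat) :
  Hb_restr_injective phi i ->
  Hb_restr_injective (fun g => phi' (phi g)) i /\
    Hb_restr_surjective (fun g => phi' (phi g)) i ->
  Hb_restr_injective phi' i /\ Hb_restr_surjective phi' i.
Proof.
move=> inj_phi [inj_comp surj_comp]; split.
  exact: restr_injective_of_comp.
exact: restr_surjective_of_comp.
Qed.

End TwoOutOfThree.

Theorem mainTheorem19 (n : natinf) (Gam K L : group)
  (phi : Gam -> K) (phi' : K -> L) :
  is_hom phi -> is_hom phi' ->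
  boundedly_acyclic phi n ->
  boundedly_acyclic (fun g => phi' (phi g)) n ->
  boundedly_acyclic phi' n.
Proof.
move=> hom_phi hom_phi'; case: n => [m|] /=.
  move=> [acyc_phi _] [acyc_comp inj_comp_top]; split.
    move=> i le_im; apply: restr_bijective_of_comp (acyc_comp i le_im) => //.
    by case: (acyc_phi i le_im).
  exact: restr_injective_of_comp inj_comp_top.
move=> acyc_phi acyc_comp i.
apply: restr_bijective_of_comp (acyc_comp i) => //.
by case: (acyc_phi i).
Qed.
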